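(* Let $G$ be an abelian group and $\phi:G\to\mathbb{H}$ a function with $\phi(0)=1$ and $\sup_{g\in G}|\phi(g)|=1$ satisfying, for all $a,b\in G$, $$2\,\mathrm{Re}\,\phi(b)\,\mathrm{Re}\,\phi(a)=\mathrm{Re}\,\phi(a+b)+\mathrm{Re}\,\phi(a-b),\qquad 2\,\mathrm{Re}\,\phi(b)\,\mathrm{Im}\,\phi(a)=\mathrm{Im}\,\phi(a+b)+\mathrm{Im}\,\phi(a-b).$$ Then there exists an imaginary unit $I\in\mathbb{H}$ such that $\phi(G)\subseteq\mathbb{C}_I$.
   Context: $\mathbb{H}$ is the real quaternion algebra; for $q=a_0+a_1i_1+a_2i_2+a_3i_3$, $\mathrm{Re}\,q=a_0$, $\mathrm{Im}\,q=a_1i_1+a_2i_2+a_3i_3$, $|q|=\sqrt{a_0^2+a_1^2+a_2^2+a_3^2}$. An imaginary unit is a quaternion $I$ with $\mathrm{Re}\,I=0$, $|I|=1$; $\mathbb{C}_I=\mathbb{R}\oplus I\mathbb{R}$. *)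

From HB Require Import structures.
From mathcomp Require Import all_boot all_order all_algebra.
From mathcomp Require Import boolp classical_sets reals.
Set Implicit Arguments. Unset Strict Implicit. Unset Printing Implicit Defensive.
Import Order.TTheory GRing.Theory Num.Theory.
Local Open Scope ring_scope.

(** Real quaternions  q = a0 + a1 i1 + a2 i2 + a3 i3, as 4-tuples of reals. *)
Record quat (R : Type) := Quat { q0 : R; q1 : R; q2 : R; q3 : R }.

Section Quat.
Variable R : rcfType.

Definition qreal (r : R) : quat R := Quat r 0 0 0.
Definition qadd (p q : quat R) : quat R :=
  Quat (q0 p + q0 q) (q1 p + q1 q) (q2 p + q2 q) (q3 p + q3 q).
(** multiplication by a real scalar (= quaternion product with a real) *)
Definition qscale (r : R) (q : quat R) : quat R :=
  Quat (r * q0 q) (r * q1 q) (r * q2 q) (r * q3 q).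
Definition qRe (q : quat R) : R := q0 q.
Definition qIm (q : quat R) : quat R := Quat 0 (q1 q) (q2 q) (q3 q).
Definition qnorm (q : quat R) : R :=
  Num.sqrt (q0 q ^+ 2 + q1 q ^+ 2 + q2 q ^+ 2 + q3 q ^+ 2).
Definition imag_unit (I : quat R) : Prop := qRe I = 0 /\ qnorm I = 1.
Definition in_CI (I q : quat R) : Prop :=
  exists x y : R, q = qadd (qreal x) (qscale y I).
End Quat.

From HB Require Import structures.
From mathcomp Require Import all_boot all_order all_algebra.
From mathcomp Require Import boolp classical_sets reals.
From mathcomp Require Import ring lra.
Import Order.TTheory GRing.Theory Num.Theory.
Local Open Scope ring_scope.
Local Open Scope classical_set_scope.

(* Write phi = f + v with f = Re phi and v = Im phi.  The hypotheses make f a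
   d'Alembert "cosine" and each coordinate of v an associated "sine", so
   v (a + b) = f b v a + f a v b; associativity of + then gives
   v z (1 - f x ^ 2) = v x (f (z - x) - f x f z).  As |phi| <= 1, any b with
   v b <> 0 has 1 - f b ^ 2 >= |v b| ^ 2 > 0, so every v z is a real multiple
   of v b and I = v b / |v b| works; if v vanishes identically, any I does. *)

Section SineCosine.
Context {R : numFieldType} {G : zmodType} (f g : G -> R).
Hypothesis f0 : f 0 = 1.
Hypothesis cosine_eq : forall a b, 2 * f b * f a = f (a + b) + f (a - b).
Hypothesis g0 : g 0 = 0.
Hypothesis sine_eq : forall a b, 2 * f b * g a = g (a + b) + g (a - b).

Lemma cosine_even b : f (- b) = f b.
Proof.
have := cosine_eq 0 b; rewrite f0 add0r sub0r mulr1 => e.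
by apply: (addrI (f b)); rewrite -e mulr_natl mulr2n.
Qed.

Lemma sine_odd b : g (- b) = - g b.
Proof.
have := sine_eq 0 b; rewrite g0 mulr0 add0r sub0r => /esym/eqP.
by rewrite addrC addr_eq0 => /eqP.
Qed.

Lemma sine_add a b : g (a + b) = f b * g a + f a * g b.
Proof.
have e1 := sine_eq a b; have e2 := sine_eq b a.
rewrite (addrC b) -(opprB a) sine_odd in e2.
have two_neq0 : (2 : R) != 0 by rewrite pnatr_eq0.
apply: (mulfI two_neq0).
by rewrite mulrDr !mulrA e1 e2; ring.
Qed.

(* Expand both sides of g (x + y + z) = g (x + (y + z)) by sine_add. *)
Lemma sine_exchange x y z :
  g z * (f (x + y) - f x * f y) = g x * (f (y + z) - f y * f z).
Proof.
have e : g (x + y + z) - g (x + (y + z)) = 0 by rewrite addrA subrr.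
rewrite !sine_add in e.
by apply/eqP; rewrite -subr_eq0 -e; apply/eqP; ring.
Qed.

Lemma sine_ratio x z : 1 - f x ^+ 2 != 0 ->
  g z = (f (z - x) - f x * f z) / (1 - f x ^+ 2) * g x.
Proof.
move=> cx_neq0; have e := sine_exchange x (- x) z.
rewrite subrr f0 cosine_even -expr2 (addrC (- x)) in e.
by rewrite mulrAC (mulrC _ (g x)) -e mulfK.
Qed.

End SineCosine.

Section Quaternions.
Context {R : rcfType}.
Implicit Types (q I : quat R) (r s : R).

Lemma qnorm_ge0 q : 0 <= qnorm q.
Proof. exact: sqrtr_ge0. Qed.

Lemma sqr_qnorm q : qnorm q ^+ 2 = q0 q ^+ 2 + q1 q ^+ 2 + q2 q ^+ 2 + q3 q ^+ 2.
Proof. by rewrite sqr_sqrtr // !addr_ge0 ?sqr_ge0. Qed.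

Lemma sqr_qnorm_ReIm q : qnorm q ^+ 2 = qRe q ^+ 2 + qnorm (qIm q) ^+ 2.
Proof. by rewrite !sqr_qnorm /= expr0n /= add0r !addrA. Qed.

Lemma qnormZ r q : qnorm (qscale r q) = `|r| * qnorm q.
Proof.
rewrite /qnorm -sqrtr_sqr -sqrtrM ?sqr_ge0 //=.
by congr Num.sqrt; ring.
Qed.

Lemma qnorm_eq0 q : qnorm q = 0 -> q = qreal 0.
Proof.
move=> /(congr1 (fun x => x ^+ 2)); rewrite sqr_qnorm expr0n /=.
case: q => a b c d /= e; rewrite /qreal.
by congr Quat; apply/eqP; rewrite -sqrf_eq0; apply/eqP; nra.
Qed.

Lemma sqr_qRe_lt1 q : qnorm q <= 1 -> qnorm (qIm q) != 0 -> qRe q ^+ 2 < 1.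
Proof.
move=> q_le1 Im_neq0; have := exprn_ile1 2 (qnorm_ge0 q) q_le1.
rewrite sqr_qnorm_ReIm; apply: lt_le_trans; rewrite ltrDl exprn_gt0 //.
by rewrite lt_neqAle eq_sym Im_neq0 qnorm_ge0.
Qed.

Lemma qscale0 q : qscale 0 q = qreal 0.
Proof. by rewrite /qscale /qreal !mul0r. Qed.

Lemma qscaleA r s q : qscale r (qscale s q) = qscale (r * s) q.
Proof. by rewrite /qscale /= !mulrA. Qed.

Lemma imag_unit_normalize q : qnorm (qIm q) != 0 ->
  imag_unit (qscale (qnorm (qIm q))^-1 (qIm q)).
Proof.
move=> nq; split; first by rewrite /qRe /= mulr0.
by rewrite qnormZ ger0_norm ?invr_ge0 ?qnorm_ge0 // mulVf.
Qed.

Lemma in_CI_qIm I q r : qIm q = qscale r I -> in_CI I q.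
Proof.
case: q I => a b c d [a' b' c' d'] [e0 e1 e2 e3]; exists a, r.
by rewrite /qadd /qreal /= -e0 -e1 -e2 -e3 addr0 !add0r.
Qed.

End Quaternions.

Lemma le_sup_neq0 (R : realType) (E : set R) x : sup E != 0 -> E x -> x <= sup E.
Proof.
move=> sup_neq0 Ex; have [supE | /sup_out supE0] := pselect (has_sup E).
  exact: sup_upper_bound.
by move: sup_neq0; rewrite supE0 eqxx.
Qed.

Theorem mainTheorem10 (R : realType) (G : zmodType) (phi : G -> quat R)
  (phi0 : phi 0 = qreal 1)
  (phisup : sup [set qnorm (phi g) | g in [set: G]] = 1)
  (hRe : forall a b : G,
     2 * qRe (phi b) * qRe (phi a) = qRe (phi (a + b)) + qRe (phi (a - b)))
  (hIm : forall a b : G,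
     qscale (2 * qRe (phi b)) (qIm (phi a)) =
     qadd (qIm (phi (a + b))) (qIm (phi (a - b)))) :
  exists I : quat R, imag_unit I /\ forall g : G, in_CI I (phi g).
Proof.
set f := fun g => qRe (phi g).
have f0 : f 0 = 1 by rewrite /f phi0.
have phi_le1 g : qnorm (phi g) <= 1.
  by rewrite -phisup; apply: le_sup_neq0; [rewrite phisup oner_neq0 | exists g].
have [[b Ib_neq0] | /forallNP Im0] := pselect (exists b, qnorm (qIm (phi b)) != 0).
  set n := qnorm (qIm (phi b)); set c := 1 - f b ^+ 2.
  have c_gt0 : 0 < c by rewrite subr_gt0 sqr_qRe_lt1.
  exists (qscale n^-1 (qIm (phi b))); split; first exact: imag_unit_normalize.
  move=> z; set t := (f (z - b) - f b * f z) / c.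
  (* k ranges over the imaginary coordinates q1, q2, q3. *)
  have coord_ratio (k : quat R -> R) : k (qreal 1) = 0 ->
      (forall r q, k (qscale r (qIm q)) = r * k q) ->
      (forall p q, k (qadd (qIm p) (qIm q)) = k p + k q) ->
    k (phi z) = t * k (phi b).
    move=> k1 kZ kD; apply: (sine_ratio f (k \o phi) f0 hRe) => [|a a'|].
    - by rewrite /= phi0.
    - by rewrite /= -kZ -kD -hIm.
    - exact: lt0r_neq0.
  apply: (in_CI_qIm _ _ (n * t)); rewrite qscaleA mulrAC divff // mul1r.
  rewrite /qIm /qscale mulr0; congr Quat => /=; apply: coord_ratio => //.
exists (Quat 0 1 0 0); split.
  by split => //; rewrite /qnorm /= expr0n expr1n /= add0r !addr0 sqrtr1.
move=> g; apply: (in_CI_qIm _ _ 0); rewrite qscale0.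
by apply: qnorm_eq0; apply/eqP/negPn/negP/Im0.
Qed.
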